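(* An integral domain $D$ is a $\ast$-SH domain of type $1$ if and only if $D$ is a $\ast$-weakly Krull domain.
   Context: $\ast$ is a star operation on $D$ of finite character. A $\ast$-ideal is a nonzero fractional ideal $I$ with $I^\ast=I$; it is of finite type if $I=J^\ast$ for some nonzero finitely generated $J$. A maximal $\ast$-ideal is an integral $\ast$-ideal maximal among proper integral $\ast$-ideals. A $\ast$-homog ideal is an integral $\ast$-ideal $I$ of finite type with $I\subsetneq D$ such that $(J+L)^{\ast}\neq D$ for every pair $J,L$ of proper integral $\ast$-ideals of finite type containing $I$; such $I$ lies in a unique maximal $\ast$-ideal $M(I)$. $D$ is a $\ast$-SH domain if every $xD$, $x$ a nonzero nonunit, is a $\ast$-product $(I_1\cdots I_n)^\ast$ of finitely many $\ast$-homog ideals. A $\ast$-homog ideal $I$ is of type $1$ if for every $x\in M(I)\setminus\{0\}$ there is a positive integer $n$ with $x^nD_{M(I)}\cap D\subseteq I$. $D$ is a $\ast$-SH domain of type $1$ if for every nonzero nonunit $x$, $xD$ is a $\ast$-product of finitely many $\ast$-homog ideals of type $1$. $D$ is a $\ast$-weakly Krull domain if $D$ is a $\ast$-SH domain in which every maximal $\ast$-ideal has height $1$. *)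

(* Star operations on an integral domain D, with fractional
   ideals represented as predicates (K -> Prop) on the fraction field
   K = {fraction D}. *)
From HB Require Import structures.
From mathcomp Require Import all_boot all_order all_algebra.
Set Implicit Arguments. Unset Strict Implicit. Unset Printing Implicit Defensive.
Import Order.TTheory GRing.Theory Num.Theory.
Local Open Scope ring_scope.

Section StarDefs.
Variable D : idomainType.
Local Notation K := {fraction D}.
Definition emb (d : D) : K := @FracField.tofrac D d.

Definition ksubset (A B : K -> Prop) := forall z, A z -> B z.
Definition kseteq (A B : K -> Prop) := forall z, A z <-> B z.

Definition Dset : K -> Prop := fun z => exists d : D, z = emb d.

Definition submodule (A : K -> Prop) :=
  [/\ A 0, (forall a b, A a -> A b -> A (a + b)) &
      (forall (d : D) a, A a -> A (emb d * a))].

Definition knonzero (A : K -> Prop) := exists z, A z /\ z != 0.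

Definition frac_ideal (A : K -> Prop) :=
  [/\ submodule A, knonzero A &
      exists d : D, d != 0 /\ forall z, A z -> Dset (emb d * z)].

Definition kscale (x : K) (A : K -> Prop) : K -> Prop :=
  fun z => exists a, A a /\ z = x * a.

Definition principal (x : K) := kscale x Dset.

Definition span (s : seq K) : K -> Prop :=
  fun z => exists c : nat -> D, z = \sum_(i < size s) emb (c i) * s`_i.

Definition fin_gen (A : K -> Prop) := exists s : seq K, kseteq A (span s).

Definition ksum (A B : K -> Prop) : K -> Prop :=
  fun z => exists a b, [/\ A a, B b & z = a + b].

Definition kmul (A B : K -> Prop) : K -> Prop :=
  fun z => exists (n : nat) (a b : nat -> K),
    (forall i, (i < n)%N -> A (a i) /\ B (b i)) /\ z = \sum_(i < n) a i * b i.

Definition kprod (s : seq (K -> Prop)) : K -> Prop := foldr kmul Dset s.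

Definition is_star_op (star : (K -> Prop) -> (K -> Prop)) :=
  (forall A, frac_ideal A -> frac_ideal (star A)) /\
  [/\ (forall x : K, x != 0 -> kseteq (star (principal x)) (principal x)),
      (forall (x : K) A, x != 0 -> frac_ideal A ->
          kseteq (star (kscale x A)) (kscale x (star A))),
      (forall A, frac_ideal A -> ksubset A (star A)),
      (forall A B, frac_ideal A -> frac_ideal B -> ksubset A B ->
          ksubset (star A) (star B)) &
      (forall A, frac_ideal A -> kseteq (star (star A)) (star A))].

Definition finite_character (star : (K -> Prop) -> (K -> Prop)) :=
  forall A, frac_ideal A ->
    kseteq (star A)
      (fun z => exists J, [/\ fin_gen J, knonzero J, ksubset J A & star J z]).

Section WithStar.
Variable star : (K -> Prop) -> (K -> Prop).

Definition star_ideal (A : K -> Prop) := frac_ideal A /\ kseteq (star A) A.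

Definition finite_type (A : K -> Prop) :=
  star_ideal A /\ exists J, [/\ fin_gen J, knonzero J & kseteq A (star J)].

Definition integral (A : K -> Prop) := ksubset A Dset.

Definition proper_integral (A : K -> Prop) := integral A /\ ~ ksubset Dset A.

Definition max_star (M : K -> Prop) :=
  [/\ star_ideal M, proper_integral M &
      forall N, star_ideal N -> proper_integral N -> ksubset M N -> kseteq N M].

Definition star_homog (I : K -> Prop) :=
  [/\ finite_type I, proper_integral I &
      forall J L, finite_type J -> proper_integral J ->
                  finite_type L -> proper_integral L ->
                  ksubset I J -> ksubset I L ->
                  ~ kseteq (star (ksum J L)) Dset].

(* x^n D_M ∩ D, as a subset of K *)
Definition loc_pow_cap (M : K -> Prop) (x : K) (n : nat) : K -> Prop :=
  fun z => Dset z /\ exists (a s : D), ~ M (emb s) /\ z * emb s = x ^+ n * emb a.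

(* M(I) is the unique maximal star-ideal containing I *)
Definition star_homog_type1 (I : K -> Prop) :=
  star_homog I /\
  forall M, max_star M -> ksubset I M ->
    forall x, M x -> x != 0 ->
      exists n : nat, (0 < n)%N /\ ksubset (loc_pow_cap M x n) I.

Definition star_SH :=
  forall x : D, x != 0 -> x \isn't a GRing.unit ->
    exists s : seq (K -> Prop),
      (forall i, (i < size s)%N -> star_homog (nth Dset s i)) /\
      kseteq (principal (emb x)) (star (kprod s)).

Definition star_SH_type1 :=
  forall x : D, x != 0 -> x \isn't a GRing.unit ->
    exists s : seq (K -> Prop),
      (forall i, (i < size s)%N -> star_homog_type1 (nth Dset s i)) /\
      kseteq (principal (emb x)) (star (kprod s)).

End WithStar.

Definition prime_ideal (P : K -> Prop) :=
  [/\ submodule P, integral P, ~ P 1 &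
      forall a b : D, P (emb a * emb b) -> P (emb a) \/ P (emb b)].

Definition height_one (M : K -> Prop) :=
  [/\ knonzero M, prime_ideal M &
      forall P, prime_ideal P -> ksubset P M ->
        kseteq P (fun z => z = 0) \/ kseteq P M].

Definition star_weakly_Krull (star : (K -> Prop) -> (K -> Prop)) :=
  star_SH star /\ forall M, max_star star M -> height_one M.

End StarDefs.

(* A maximal star-ideal M is prime, because (M + tD)^* = D for every t outside M.
   If D is star-SH of type 1 and P is a nonzero prime inside M, pick a nonzero
   nonunit e in P and write eD = (I_1 ... I_n)^*; prime avoidance puts some I_i
   inside P, and type 1 puts a power of each y in M into I_i, so y lies in P:
   M has height one.  Conversely let I be star-homogeneous with M = M(I) of
   height one.  By Krull's separation lemma a prime between I and M avoiding
   {t y^k : t outside M} would have to be 0 or M, so some t y^k lies in I.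
   Homogeneity makes M the only maximal star-ideal above I, so (I + tD)^* = D
   and I is saturated: t w in I with t outside M forces w in I.  Hence
   y^(k+1) D_M ∩ D lies in I. *)
From Pilot Require Import Defs.
From HB Require Import structures.
From mathcomp Require Import all_boot all_order all_algebra.
From mathcomp Require classical_sets.
From mathcomp Require Import ring.
From Stdlib Require Import Classical FunctionalExtensionality PropExtensionality.
Set Implicit Arguments. Unset Strict Implicit. Unset Printing Implicit Defensive.
Import GRing.Theory.
Local Open Scope ring_scope.

Section FractionalIdeals.
Variable D : idomainType.
Local Notation K := {fraction D}.
Local Notation DS := (@Dset D).
Local Notation span := Defs.span.

Lemma kseteq_eq (A B : K -> Prop) : kseteq A B -> A = B.
Proof.
move=> AB; apply: functional_extensionality => z.
exact/propositional_extensionality/AB.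
Qed.

Lemma embD (a b : D) : emb (a + b) = emb a + emb b. Proof. exact: tofracD. Qed.

Lemma embM (a b : D) : emb (a * b) = emb a * emb b. Proof. exact: tofracM. Qed.

Lemma emb0 : emb (0 : D) = 0. Proof. exact: tofrac0. Qed.

Lemma emb1 : emb (1 : D) = 1. Proof. exact: tofrac1. Qed.

Lemma embX (a : D) n : emb (a ^+ n) = emb a ^+ n. Proof. exact: tofracXn. Qed.

Lemma emb_eq0 (a : D) : (emb a == 0) = (a == 0). Proof. exact: tofrac_eq0. Qed.

Lemma fracP (x : K) : exists p q : D, q != 0 /\ x * emb q = emb p.
Proof.
rewrite /emb; elim/quotW: x => r.
exists (\n_r), (\d_r); split; first exact: denom_ratioP.
unlock FracField.tofrac; rewrite -[_ * _]FracField.pi_mul.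
apply/eqmodP; rewrite /= FracField.equivfE /= /FracField.mulf /=.
rewrite !numden_Ratio ?mulr1 ?mul1r ?oner_eq0 //;
  [exact/eqP/mulrC | exact: denom_ratioP..].
Qed.

Lemma Dset_emb d : DS (emb d). Proof. by exists d. Qed.

Lemma Dset0 : DS 0. Proof. by exists 0; rewrite emb0. Qed.

Lemma Dset1 : DS 1. Proof. by exists 1; rewrite emb1. Qed.

Lemma DsetD a b : DS a -> DS b -> DS (a + b).
Proof. by move=> [x ->] [y ->]; exists (x + y); rewrite embD. Qed.

Lemma DsetM a b : DS a -> DS b -> DS (a * b).
Proof. by move=> [x ->] [y ->]; exists (x * y); rewrite embM. Qed.

Lemma Dset_sum n (F : 'I_n -> K) : (forall i, DS (F i)) -> DS (\sum_(i < n) F i).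
Proof. by move=> FD; apply: (big_ind DS) => //; [exact: Dset0 | exact: DsetD]. Qed.

Lemma submodule_sum (A : K -> Prop) n (F : 'I_n -> K) : submodule A ->
  (forall i, A (F i)) -> A (\sum_(i < n) F i).
Proof. by case=> A0 AD _ FA; apply: (big_ind A). Qed.

Lemma submoduleZ (A : K -> Prop) z a : submodule A -> DS z -> A a -> A (z * a).
Proof. by case=> _ _ AZ [d ->]; apply: AZ. Qed.

Lemma Dset_sub_submodule (A : K -> Prop) : submodule A -> A 1 -> ksubset DS A.
Proof. by move=> sA A1 z Dz; rewrite -[z]mulr1; apply: submoduleZ. Qed.

Lemma submodule_Dset : submodule DS.
Proof. by split; [exact: Dset0 | exact: DsetD | move=> d a; apply/DsetM/Dset_emb]. Qed.

Lemma submodule_ksum (A B : K -> Prop) :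
  submodule A -> submodule B -> submodule (ksum A B).
Proof.
move=> [A0 AD AZ] [B0 BD BZ]; split.
- by exists 0, 0; rewrite addr0.
- move=> _ _ [a1 [b1 [Aa1 Bb1 ->]]] [a2 [b2 [Aa2 Bb2 ->]]].
  by exists (a1 + a2), (b1 + b2); rewrite addrACA; split; [exact: AD | exact: BD |].
- move=> c _ [a [b [Aa Bb ->]]].
  by exists (emb c * a), (emb c * b); rewrite mulrDr; split; [exact: AZ | exact: BZ |].
Qed.

Lemma ksum_subl (A B : K -> Prop) : B 0 -> ksubset A (ksum A B).
Proof. by move=> B0 a Aa; exists a, 0; rewrite addr0. Qed.

Lemma ksum_subr (A B : K -> Prop) : A 0 -> ksubset B (ksum A B).
Proof. by move=> A0 b Bb; exists 0, b; rewrite add0r. Qed.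

Lemma integral_ksum (A B : K -> Prop) :
  integral A -> integral B -> integral (ksum A B).
Proof. by move=> iA iB _ [a [b [Aa Bb ->]]]; apply: DsetD; [exact: iA | exact: iB]. Qed.

Lemma principal_self (x : K) : principal x x.
Proof. by exists 1; split; [exact: Dset1 | rewrite mulr1]. Qed.

Lemma principal0 (x : K) : principal x 0.
Proof. by exists 0; split; [exact: Dset0 | rewrite mulr0]. Qed.

Lemma principal1 : principal 1 = DS.
Proof.
apply: kseteq_eq => z; split => [[a [Da ->]] | Dz]; first by rewrite mul1r.
by exists z; rewrite mul1r.
Qed.

Lemma submodule_principal (x : K) : submodule (principal x).
Proof.
split; first exact: principal0.
- move=> _ _ [a [Da ->]] [b [Db ->]].
  by exists (a + b); rewrite mulrDr; split; first exact: DsetD.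
- move=> c _ [a [Da ->]]; exists (emb c * a); rewrite mulrCA; split => //.
  exact/DsetM/Da/Dset_emb.
Qed.

Lemma integral_principal (t : D) : integral (principal (emb t)).
Proof. by move=> _ [w [Dw ->]]; apply/DsetM/Dw/Dset_emb. Qed.

Lemma frac_ideal_integral (A : K -> Prop) :
  submodule A -> knonzero A -> integral A -> frac_ideal A.
Proof.
move=> sA nA iA; split => //; exists 1; split; first exact: oner_neq0.
by move=> z /iA; rewrite emb1 mul1r.
Qed.

Lemma frac_ideal_Dset : frac_ideal DS.
Proof.
apply: frac_ideal_integral; [exact: submodule_Dset | | by []].
by exists 1; split; [exact: Dset1 | exact: oner_neq0].
Qed.

Lemma frac_ideal_kscale (e : D) (A : K -> Prop) : e != 0 -> frac_ideal A ->
  frac_ideal (kscale (emb e) A).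
Proof.
move=> e0 [[A0 AD AZ] [a [Aa a0]] [d [d0 Ad]]]; split.
- split; first by exists 0; rewrite mulr0.
  + move=> _ _ [x [Ax ->]] [y [Ay ->]].
    by exists (x + y); rewrite mulrDr; split; first exact: AD.
  + by move=> c _ [x [Ax ->]]; exists (emb c * x); rewrite mulrCA; split; first exact: AZ.
- by exists (emb e * a); split; [exists a | rewrite mulf_neq0 ?emb_eq0].
- exists d; split => // _ [x [Ax ->]].
  by rewrite mulrCA; apply/DsetM/Ad/Ax/Dset_emb.
Qed.

Lemma frac_ideal_principal (e : D) : e != 0 -> frac_ideal (principal (emb e)).
Proof. by move=> e0; apply: frac_ideal_kscale e0 frac_ideal_Dset. Qed.

Lemma frac_ideal_ksum (A B : K -> Prop) : frac_ideal A -> frac_ideal B ->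
  frac_ideal (ksum A B).
Proof.
move=> [sA [a [Aa a0]] [d [d0 Ad]]] [sB _ [e [e0 Be]]]; split.
- exact: submodule_ksum.
- by exists a; split => //; apply: ksum_subl Aa; case: sB.
- exists (d * e); split; first by rewrite mulf_neq0.
  move=> _ [x [y [Ax By ->]]]; rewrite embM mulrDr; apply: DsetD.
  + by rewrite mulrAC mulrC; apply/DsetM/Ad/Ax/Dset_emb.
  + by rewrite -mulrA; apply/DsetM/Be/By/Dset_emb.
Qed.

Lemma frac_ideal_kmul (A B : K -> Prop) : frac_ideal A -> frac_ideal B ->
  frac_ideal (kmul A B).
Proof.
move=> [[A0 AD AZ] [a [Aa a0]] [d [d0 Ad]]] [[B0 BD BZ] [b [Bb b0]] [e [e0 Be]]].
split.
- split; first by exists 0%N, (fun _ => 0), (fun _ => 0); rewrite big_ord0.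
  + move=> _ _ [n1 [a1 [b1 [h1 ->]]]] [n2 [a2 [b2 [h2 ->]]]].
    exists (n1 + n2)%N, (fun i => if (i < n1)%N then a1 i else a2 (i - n1)%N),
      (fun i => if (i < n1)%N then b1 i else b2 (i - n1)%N); split.
      move=> i lti; case: ifP => hi; first exact: h1.
      by apply: h2; rewrite ltn_subLR // leqNgt hi.
    rewrite big_split_ord /=; congr (_ + _); apply: eq_bigr => i _ /=.
      by rewrite ltn_ord.
    by rewrite ltnNge leq_addr /= addKn.
  + move=> c _ [n [a1 [b1 [h1 ->]]]]; exists n, (fun i => emb c * a1 i), b1.
    split; first by move=> i /h1 [Aa1 Bb1]; split => //; exact: AZ.
    by rewrite mulr_sumr; apply: eq_bigr => i _; rewrite mulrA.
- exists (a * b); split; last by rewrite mulf_neq0.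
  by exists 1%N, (fun _ => a), (fun _ => b); rewrite big_ord1.
- exists (d * e); split; first by rewrite mulf_neq0.
  move=> _ [n [a1 [b1 [h1 ->]]]]; rewrite mulr_sumr; apply: Dset_sum => i.
  have [Aa1 Bb1] := h1 i (ltn_ord i).
  by rewrite embM mulrACA; apply: DsetM; [exact: Ad | exact: Be].
Qed.

Lemma frac_ideal_kprod (s : seq (K -> Prop)) :
  (forall i, (i < size s)%N -> frac_ideal (nth DS s i)) -> frac_ideal (kprod s).
Proof.
elim: s => [|A s IHs] fs /=; first exact: frac_ideal_Dset.
by apply: frac_ideal_kmul; [exact: (fs 0%N) | apply: IHs => i /(fs i.+1)].
Qed.

Lemma submodule_span (s : seq K) : submodule (span s).
Proof.
split.
- by exists (fun _ => 0); rewrite big1 // => i _; rewrite emb0 mul0r.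
- move=> _ _ [c1 ->] [c2 ->]; exists (fun i => c1 i + c2 i).
  by rewrite -big_split /=; apply: eq_bigr => i _; rewrite embD mulrDl.
- move=> d _ [c ->]; exists (fun i => d * c i).
  by rewrite mulr_sumr; apply: eq_bigr => i _; rewrite embM mulrA.
Qed.

Lemma mem_span (s : seq K) x : x \in s -> span s x.
Proof.
move=> xs; exists (fun i => if i == index x s then 1 else 0).
have xi : (index x s < size s)%N by rewrite index_mem.
rewrite (bigD1 (Ordinal xi)) //= eqxx emb1 mul1r nth_index //.
rewrite big1 ?addr0 // => i /eqP ne; case: eqP => [ei | _]; last by rewrite emb0 mul0r.
by case: ne; apply: val_inj.
Qed.

Lemma span_sub (s : seq K) (A : K -> Prop) : submodule A ->
  (forall x, x \in s -> A x) -> ksubset (span s) A.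
Proof.
move=> sA sAx _ [c ->]; apply: submodule_sum => // i.
by case: sA => _ _ AZ; apply/AZ/sAx/mem_nth.
Qed.

Lemma span_catl (s1 s2 : seq K) : ksubset (span s1) (span (s1 ++ s2)).
Proof.
by apply: span_sub; [exact: submodule_span | move=> x xs; apply: mem_span; rewrite mem_cat xs].
Qed.

Lemma span_catr (s1 s2 : seq K) : ksubset (span s2) (span (s1 ++ s2)).
Proof.
apply: span_sub; first exact: submodule_span.
by move=> x xs; apply: mem_span; rewrite mem_cat xs orbT.
Qed.

Lemma common_denominator (s : seq K) :
  exists d : D, d != 0 /\ forall x, x \in s -> DS (emb d * x).
Proof.
elim: s => [|x s [d [d0 ds]]]; first by exists 1; split => //; exact: oner_neq0.
have [p [q [q0 xq]]] := fracP x.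
exists (q * d); split; first by rewrite mulf_neq0.
move=> y; rewrite inE => /orP[/eqP -> | ys].
  by rewrite embM mulrAC [emb q * x]mulrC xq; apply/DsetM/Dset_emb/Dset_emb.
by rewrite embM -mulrA; apply/DsetM/ds/ys/Dset_emb.
Qed.

Lemma frac_ideal_span (s : seq K) : knonzero (span s) -> frac_ideal (span s).
Proof.
move=> nz; split => //; first exact: submodule_span.
have [d [d0 ds]] := common_denominator s; exists d; split => // _ [c ->].
rewrite mulr_sumr; apply: Dset_sum => i; rewrite mulrCA.
apply/DsetM; first exact: Dset_emb.
have [lti | gei] := ltnP i (size s); first exact/ds/mem_nth.
by rewrite nth_default // mulr0; exact: Dset0.
Qed.

Lemma split_gens (A : K -> Prop) (t : K) (s : seq K) :
  (forall g, g \in s -> ksum A (principal t) g) ->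
  exists ms : seq K, (forall m, m \in ms -> A m) /\
    forall g, g \in s -> ksum (span ms) (principal t) g.
Proof.
elim: s => [|g s IHs] sA; first by exists [::].
have [|ms [msA sms]] := IHs; first by move=> y ys; apply: sA; rewrite inE ys orbT.
have [m [p [Am tp ->]]] := sA g (mem_head _ _).
exists (m :: ms); split; first by move=> y; rewrite inE => /orP[/eqP -> | /msA].
move=> y; rewrite inE => /orP[/eqP -> | ys].
  by exists m, p; split => //; apply/mem_span/mem_head.
have [m1 [p1 [ms_m1 tp1 ->]]] := sms y ys; exists m1, p1; split => //.
exact: (@span_catr [:: m] ms).
Qed.

Definition kchain (F : (K -> Prop) -> Prop) :=
  forall X Y, F X -> F Y -> ksubset X Y \/ ksubset Y X.

Definition kunion (F : (K -> Prop) -> Prop) : K -> Prop :=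
  fun z => exists2 X, F X & X z.

Lemma zorn_ksubset (Q : (K -> Prop) -> Prop) (A0 : K -> Prop) :
  Q A0 -> (exists z, A0 z) ->
  (forall F, (forall X, F X -> Q X) -> (exists X, F X) -> kchain F -> Q (kunion F)) ->
  exists N, Q N /\ forall N', Q N' -> ksubset N N' -> ksubset N' N.
Proof.
move=> QA0 [z0 A0z0] Qchain.
(* The empty set is added to Q so that Zorn applies to the empty chain too. *)
pose P X := (forall z, ~ X z) \/ Q X.
have [|A [PA maxA]] := @classical_sets.Zorn_bigcup K P.
  move=> F FP Ftot.
  have [[X0 FX0 [z X0z]] | Fempty] := classic (exists2 X, F X & exists z, X z);
    last by left=> z [X FX Xz]; apply: Fempty; exists X => //; exists z.
  have QF X : F X -> (exists z, X z) -> Q X.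
    by move=> FX [y Xy]; case: (FP X FX) => // /(_ y).
  have -> : classical_sets.bigcup F id = kunion (fun X => F X /\ Q X).
    apply: kseteq_eq => w; split => [[X FX Xw] | [X [FX _] Xw]]; last by exists X.
    by exists X => //; split => //; apply: QF => //; exists w.
  right; apply: Qchain; first by move=> X [].
    by exists X0; split => //; apply: QF => //; exists z.
  by move=> X Y [FX _] [FY _]; apply: Ftot.
have QA : Q A.
  case: PA => // Aempty; exfalso; apply: (maxA A0); last by right.
  by split; [move=> w /Aempty | move=> A0A; apply: (Aempty z0); apply: A0A].
exists A; split => // N' QN' AN'; apply: NNPP => N'A.
by apply: (maxA N'); [split | right].
Qed.

Lemma kunion_fin (F : (K -> Prop) -> Prop) (s : seq K) : (exists X, F X) ->
  kchain F -> (forall x, x \in s -> kunion F x) ->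
  exists2 X, F X & forall x, x \in s -> X x.
Proof.
move=> [X0 FX0] Ftot; elim: s => [|x s IHs] sF; first by exists X0.
have [|X FX sX] := IHs; first by move=> y ys; apply: sF; rewrite inE ys orbT.
have [Y FY Yx] := sF x (mem_head _ _).
have [XY | YX] := Ftot X Y FX FY.
  by exists Y => // y; rewrite inE => /orP[/eqP -> // | /sX /XY].
by exists X => // y; rewrite inE => /orP[/eqP -> | /sX]; [exact: YX |].
Qed.

Lemma submodule_kunion (F : (K -> Prop) -> Prop) : (exists X, F X) -> kchain F ->
  (forall X, F X -> submodule X) -> submodule (kunion F).
Proof.
move=> [X0 FX0] Ftot sF; split.
- by exists X0 => //; case: (sF X0 FX0).
- move=> a b [X FX Xa] [Y FY Yb].
  have [XY | YX] := Ftot X Y FX FY.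
    by exists Y => //; case: (sF Y FY) => _ YD _; apply: YD => //; exact: XY.
  by exists X => //; case: (sF X FX) => _ XD _; apply: XD => //; exact: YX.
- by move=> d a [X FX Xa]; exists X => //; case: (sF X FX) => _ _ XZ; apply: XZ.
Qed.

Lemma integral_kunion (F : (K -> Prop) -> Prop) :
  (forall X, F X -> integral X) -> integral (kunion F).
Proof. by move=> iF z [X FX Xz]; exact: iF FX z Xz. Qed.

Lemma prime_ideal_pow (P : K -> Prop) (f : D) n :
  prime_ideal P -> P (emb f ^+ n) -> P (emb f).
Proof.
case=> sP iP P1 Pmul; elim: n => [|n IHn]; first by rewrite expr0.
by rewrite exprS -embX => /Pmul [// | ]; rewrite embX.
Qed.

Lemma kprod_avoid_prime (P : K -> Prop) (s : seq (K -> Prop)) : prime_ideal P ->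
  (forall i, (i < size s)%N -> integral (nth DS s i) /\ ~ ksubset (nth DS s i) P) ->
  exists d : D, kprod s (emb d) /\ ~ P (emb d).
Proof.
move=> Pprime; elim: s => [|A s IHs] sP.
  by exists 1; rewrite emb1; split; [exact: Dset1 | case: Pprime].
have [iA notAP] := sP 0%N isT.
have [a APa] := not_all_ex_not _ _ notAP.
have [Aa Pa] := imply_to_and _ _ APa.
have [a' ea] := iA a Aa; subst a.
have [d [sd Pd]] := IHs (fun i => sP i.+1).
exists (a' * d); split.
  by exists 1%N, (fun _ => emb a'), (fun _ => emb d); rewrite big_ord1 embM.
by rewrite embM; case: Pprime => _ _ _ Pmul /Pmul [].
Qed.

Lemma prime_ideal_avoiding (S : D -> Prop) (I : K -> Prop) :
  S 1 -> (forall a b, S a -> S b -> S (a * b)) ->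
  submodule I -> integral I -> (forall s, S s -> ~ I (emb s)) ->
  exists P, [/\ prime_ideal P, ksubset I P & forall s, S s -> ~ P (emb s)].
Proof.
move=> S1 Smul sI iI IS.
pose Q P := [/\ submodule P, integral P, ksubset I P & forall s, S s -> ~ P (emb s)].
have QI : Q I by split.
have I0 : I 0 by case: sI.
have [|P [[sP iP IP PS] maxP]] := zorn_ksubset QI (ex_intro _ 0 I0).
  move=> F FQ Fne Ftot; split.
  + by apply: submodule_kunion => // X /FQ [].
  + by apply: integral_kunion => X /FQ [].
  + by case: Fne => X0 FX0 z Iz; exists X0 => //; case: (FQ X0 FX0) => _ _ /(_ z Iz).
  + by move=> s Ss [X /FQ [_ _ _ /(_ s Ss)]].
have P1 : ~ P 1 by rewrite -emb1; exact: PS.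
have [P0 PD _] := sP.
have meetS c : ~ P (emb c) ->
    exists s q w, [/\ S s, P q, DS w & emb s = q + emb c * w].
  move=> Pc; apply: NNPP => noS; apply: Pc.
  have QPc : Q (ksum P (principal (emb c))).
    split.
    - exact/submodule_ksum/submodule_principal.
    - exact/integral_ksum/integral_principal.
    - by move=> z /IP; apply/ksum_subl/principal0.
    - move=> s Ss [q [_ [Pq [w [Dw ->]] es]]].
      by apply: noS; exists s, q, w.
  apply: (maxP _ QPc); first exact/ksum_subl/principal0.
  exact/ksum_subr/principal_self.
exists P; split => //; split => // a b Pab.
apply: NNPP => /not_or_and [Pa Pb].
have [s1 [q1 [w1 [Ss1 Pq1 Dw1 e1]]]] := meetS a Pa.
have [s2 [q2 [w2 [Ss2 Pq2 Dw2 e2]]]] := meetS b Pb.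
apply: (PS _ (Smul _ _ Ss1 Ss2)); rewrite embM e1 e2.
have -> : (q1 + emb a * w1) * (q2 + emb b * w2) =
    (q2 + emb b * w2) * q1 + w1 * emb a * q2 + w1 * w2 * (emb a * emb b) by ring.
have Dq2 : DS (q2 + emb b * w2) := DsetD (iP _ Pq2) (DsetM (Dset_emb _) Dw2).
have Pa' : P (w1 * emb a * q2) := submoduleZ sP (DsetM Dw1 (Dset_emb _)) Pq2.
by apply/PD/(submoduleZ sP (DsetM Dw1 Dw2) Pab)/PD/Pa'/(submoduleZ sP Dq2 Pq1).
Qed.

Section StarOperation.
Variable star : (K -> Prop) -> (K -> Prop).
Hypothesis star_op : is_star_op star.
Hypothesis star_fc : finite_character star.

Lemma star_frac_ideal A : frac_ideal A -> frac_ideal (star A).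
Proof. by case: star_op => fstar _; apply: fstar. Qed.

Lemma star_ext A : frac_ideal A -> ksubset A (star A).
Proof. by case: star_op => _ [_ _ ext _ _]; apply: ext. Qed.

Lemma star_mono A B : frac_ideal A -> frac_ideal B -> ksubset A B ->
  ksubset (star A) (star B).
Proof. by case: star_op => _ [_ _ _ mono _]; apply: mono. Qed.

Lemma star_idem A : frac_ideal A -> star (star A) = star A.
Proof. by case: star_op => _ [_ _ _ _ idem] fA; apply/kseteq_eq/idem. Qed.

Lemma starZ (e : D) A : e != 0 -> frac_ideal A ->
  star (kscale (emb e) A) = kscale (emb e) (star A).
Proof.
case: star_op => _ [_ scale _ _ _] e0 fA; apply/kseteq_eq/scale => //.
by rewrite emb_eq0.
Qed.

Lemma star_Dset : star DS = DS.
Proof.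
case: star_op => _ [princ _ _ _ _]; rewrite -principal1.
exact/kseteq_eq/princ/oner_neq0.
Qed.

Lemma star_integral A : frac_ideal A -> integral A -> integral (star A).
Proof. by move=> fA iA z Az; rewrite -star_Dset; exact: star_mono frac_ideal_Dset iA z Az. Qed.

Lemma star_ideal_star A : frac_ideal A -> star_ideal star (star A).
Proof. by move=> fA; split; [exact: star_frac_ideal | rewrite star_idem]. Qed.

Lemma finite_type_star_span (s : seq K) :
  knonzero (span s) -> finite_type star (star (span s)).
Proof.
move=> nz; split; first exact/star_ideal_star/frac_ideal_span.
by exists (span s); split => //; exists s.
Qed.

Lemma star_one_fin_gen A : frac_ideal A -> star A 1 ->
  exists s : seq K, [/\ knonzero (span s), forall g, g \in s -> A g & star (span s) 1].
Proof.
move=> fA /(star_fc fA 1) [J [[s /kseteq_eq eJ] nJ JA J1]]; subst J.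
by exists s; split => // g /mem_span /JA.
Qed.

(* w = w * 1 lies in w A^* = (w A)^*. *)
Lemma star_one_scale A B (w : D) : frac_ideal A -> star_ideal star B ->
  star A 1 -> ksubset (kscale (emb w) A) B -> B (emb w).
Proof.
move=> fA [fB eB] A1 wAB; have [w0 | w0] := eqVneq w 0.
  by rewrite w0 emb0; case: fB => [[]].
have : kscale (emb w) (star A) (emb w) by exists 1; rewrite mulr1.
rewrite -starZ // => /(star_mono (frac_ideal_kscale w0 fA) fB wAB).
by rewrite (kseteq_eq eB).
Qed.

Lemma max_starP M : max_star star M ->
  [/\ frac_ideal M, submodule M, integral M, ~ M 1 & star M = M].
Proof.
case=> [[fM eM] [iM DM] _]; have sM : submodule M by case: fM.
split => //; last exact: kseteq_eq eM.
by move=> M1; exact: DM (Dset_sub_submodule sM M1).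
Qed.

Lemma proper_integral_sub_max M A : max_star star M -> ksubset A M ->
  proper_integral A.
Proof.
move=> /max_starP [_ _ iM M1 _] AM; split => [z /AM /iM // | DA].
exact/M1/AM/DA/Dset1.
Qed.

Lemma max_star_comaximal M (t : D) : max_star star M -> ~ M (emb t) ->
  star (ksum M (principal (emb t))) 1.
Proof.
move=> hM Mt; have [fM sM iM _ _] := max_starP hM.
have t0 : t != 0 by apply: contra_notN Mt => /eqP ->; rewrite emb0; case: sM.
have fS := frac_ideal_ksum fM (frac_ideal_principal t0).
set S := star (ksum M (principal (emb t))).
apply: NNPP => S1; case: hM => _ _ /(_ S (star_ideal_star fS)) maxM.
have pS : proper_integral S.
  split; first exact/star_integral/integral_ksum/integral_principal.
  by move=> DS_S; exact/S1/DS_S/Dset1.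
have MS : ksubset M S.
  by move=> z Mz; apply: star_ext => //; apply: ksum_subl Mz; exact: principal0.
have tS : S (emb t).
  by apply: star_ext => //; apply: ksum_subr; [case: sM | exact: principal_self].
by apply/Mt/(maxM pS MS).
Qed.

Lemma max_star_prime M : max_star star M -> prime_ideal M.
Proof.
move=> hM; have [fM sM iM M1 _] := max_starP hM.
split => // a b Mab; apply: NNPP => /not_or_and [Ma Mb]; apply: Mb.
have a0 : a != 0 by apply: contra_notN Ma => /eqP ->; rewrite emb0; case: sM.
apply: (star_one_scale (frac_ideal_ksum fM (frac_ideal_principal a0)) _
  (max_star_comaximal hM Ma)); first by case: hM.
move=> _ [_ [[m [_ [Mm [v [Dv ->]] ->]]] ->]]; rewrite mulrDr.
have [_ MD _] := sM; apply: MD; first exact: submoduleZ sM (Dset_emb b) Mm.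
by rewrite mulrCA mulrA mulrC; exact: submoduleZ sM Dv Mab.
Qed.

Lemma star_ideal_kunion (F : (K -> Prop) -> Prop) : (exists X, F X) -> kchain F ->
  (forall X, F X -> star_ideal star X /\ integral X) -> star_ideal star (kunion F).
Proof.
move=> [X0 FX0] Ftot sF.
have fU : frac_ideal (kunion F).
  apply: frac_ideal_integral.
  - by apply: (submodule_kunion (ex_intro _ X0 FX0) Ftot) => X /sF [[[]]].
  - by case: (sF X0 FX0) => [[[_ [z [X0z z0]] _] _] _]; exists z; split => //; exists X0.
  - by apply: integral_kunion => X /sF [].
split => // z; split => [Uz | ]; last exact: star_ext.
(* By finite character z lies in the star of finitely many elements of the
   union, and these all lie in a single member of the chain. *)
have [J [[s /kseteq_eq eJ] nJ JU Jz]] := (star_fc fU z).1 Uz; subst J.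
have [X FX sX] := kunion_fin (ex_intro _ X0 FX0) Ftot (fun x xs => JU x (mem_span xs)).
have [[fX eX] _] := sF X FX.
exists X => //; apply/(eX z); apply: (star_mono (frac_ideal_span nJ) fX) Jz.
by apply: span_sub => //; case: fX.
Qed.

Lemma max_star_exists A : frac_ideal A -> integral A -> ~ star A 1 ->
  exists N, max_star star N /\ ksubset (star A) N.
Proof.
move=> fA iA A1.
pose Q N := [/\ star_ideal star N, integral N, ~ N 1 & ksubset (star A) N].
have QA : Q (star A) by split => //; [exact: star_ideal_star | exact: star_integral].
have [z0 [Az0 _]] : knonzero (star A) by case: (star_frac_ideal fA).
have [|N [[sN iN N1 AN] maxN]] := zorn_ksubset QA (ex_intro _ z0 Az0).
  move=> F FQ [X0 FX0] Ftot; split.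
  - by apply: (star_ideal_kunion (ex_intro _ X0 FX0) Ftot) => X /FQ [].
  - by apply: integral_kunion => X /FQ [].
  - by case=> X /FQ [_ _ X1 _].
  - by move=> z Az; exists X0 => //; case: (FQ X0 FX0) => _ _ _; apply.
have sub_N : submodule N by case: sN => [[]].
exists N; split => //; split => //.
  by split => // DN; exact/N1/DN/Dset1.
move=> N' sN' [iN' DN'] NN' z; split => [|/NN' //].
apply: maxN => //; split => //; last by move=> w /AN /NN'.
by move=> N'1; apply: DN'; apply: Dset_sub_submodule N'1; case: sN' => [[]].
Qed.

Lemma star_homog_span I : star_homog star I ->
  exists gs : seq K, knonzero (span gs) /\ I = star (span gs).
Proof.
by case=> [[_ [J [[gs /kseteq_eq ->] nJ /kseteq_eq ->]]] _ _]; exists gs.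
Qed.

(* For t in N outside M, 1 in (M + tD)^* is witnessed by finitely many m_i + t v_i;
   then (G, m_i)^* inside M and (G, t)^* inside N are comaximal star-ideals of
   finite type containing I = G^*, against homogeneity. *)
Lemma star_homog_max_unique I M N : star_homog star I ->
  max_star star M -> max_star star N -> ksubset I M -> ksubset I N -> ksubset N M.
Proof.
move=> hI hM hN IM IN; have [gs [nG eI]] := star_homog_span hI.
have [_ _ hom] := hI; rewrite {}eI in IM IN hom.
have [fM sM iM _ sMM] := max_starP hM; have [fN sN iN _ sNN] := max_starP hN.
move=> z Nz; apply: NNPP => Mz.
have [t et] := iN z Nz; subst z.
have t0 : t != 0 by apply: contra_notN Mz => /eqP ->; rewrite emb0; case: sM.
have [s0 [ns0 s0MT s01]] :=
  star_one_fin_gen (frac_ideal_ksum fM (frac_ideal_principal t0)) (max_star_comaximal hM Mz).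
have [ms [msM s0ms]] := split_gens s0MT.
have nJ : knonzero (span (gs ++ ms)).
  by case: nG => z [Gz z0]; exists z; split => //; exact: span_catl.
have nL : knonzero (span (emb t :: gs)).
  by case: nG => z [Gz z0]; exists z; split => //; exact: (@span_catr [:: emb t] gs).
have fG := frac_ideal_span nG; have fJ := frac_ideal_span nJ; have fL := frac_ideal_span nL.
have GIM : ksubset (span gs) M by move=> z /(star_ext fG) /IM.
have GIN : ksubset (span gs) N by move=> z /(star_ext fG) /IN.
set J := star (span (gs ++ ms)); set L := star (span (emb t :: gs)).
have JM : ksubset J M.
  rewrite -sMM; apply: star_mono => //; apply: span_sub => // x; rewrite mem_cat.
  by case/orP => [/mem_span/GIM | /msM].
have LN : ksubset L N.
  rewrite -sNN; apply: star_mono => //; apply: span_sub => // x; rewrite inE.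
  by case/orP => [/eqP -> // | /mem_span/GIN].
have fJL := frac_ideal_ksum (star_frac_ideal fJ) (star_frac_ideal fL).
have [sJL _ _] := star_frac_ideal fJL.
apply: (hom J L (finite_type_star_span nJ) (proper_integral_sub_max hM JM)
  (finite_type_star_span nL) (proper_integral_sub_max hN LN)).
- exact/star_mono/span_catl.
- exact/star_mono/(@span_catr [:: emb t] gs).
move=> z; split; first by apply: star_integral => //; apply: integral_ksum => w;
  [move/JM; exact: iM | move/LN; exact: iN].
move=> Dz; apply: (Dset_sub_submodule sJL) Dz.
apply: (star_mono (frac_ideal_span ns0) fJL) s01.
have [sJ _ _] := star_frac_ideal fJ; have [sL _ _] := star_frac_ideal fL.
apply: span_sub => [|g /s0ms [m [_ [ms_m [v [Dv ->]] ->]]]]; first exact: submodule_ksum.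
exists m, (emb t * v); split => //; first exact/star_ext/span_catr.
by rewrite mulrC; apply: submoduleZ sL Dv _; apply/star_ext/mem_span/mem_head.
Qed.

Lemma star_homog_saturated M I (t w : D) : max_star star M -> star_homog star I ->
  ksubset I M -> ~ M (emb t) -> I (emb t * emb w) -> I (emb w).
Proof.
move=> hM hI IM Mt Itw; have [gs [nG eI]] := star_homog_span hI.
have fG := frac_ideal_span nG.
have t0 : t != 0.
  by apply: contra_notN Mt => /eqP ->; rewrite emb0; case: (max_starP hM) => _ [].
set A := ksum (span gs) (principal (emb t)).
have fA : frac_ideal A := frac_ideal_ksum fG (frac_ideal_principal t0).
have iI : integral I by case: hI => _ [].
have GI : ksubset (span gs) I by rewrite eI; exact: star_ext.
have A1 : star A 1.
  apply: NNPP => A1; have iA : integral A.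
    by apply: integral_ksum; [move=> z /GI /iI | exact: integral_principal].
  have [N [hN AN]] := max_star_exists fA iA A1.
  have IN : ksubset I N.
    rewrite eI => z /(star_mono fG fA (ksum_subl (principal0 _))); exact: AN.
  apply/Mt/(star_homog_max_unique hI hM hN IM IN)/AN/star_ext => //.
  by apply: ksum_subr; [case: fG => [[]] | exact: principal_self].
have sI : submodule I by case: hI => [[[[]]]].
apply: (star_one_scale fA _ A1); first by case: hI => [[]].
move=> _ [_ [[g [_ [Gg [v [Dv ->]] ->]]] ->]].
have -> : emb w * (g + emb t * v) = emb w * g + v * (emb t * emb w) by ring.
have [_ ID _] := sI; apply: ID; first exact: submoduleZ sI (Dset_emb w) (GI _ Gg).
exact: submoduleZ sI Dv Itw.
Qed.

Lemma height_one_pow_mem M I (y : D) : max_star star M -> height_one M ->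
  frac_ideal I -> integral I -> ksubset I M -> M (emb y) ->
  exists t k, ~ M (emb t) /\ I (emb t * emb y ^+ k).
Proof.
move=> hM [_ _ Mheight] fI iI IM My; apply: NNPP => noS.
have [sM _ M1 Mmul] := max_star_prime hM.
pose S (s : D) := exists t k, ~ M (emb t) /\ s = t * y ^+ k.
have S1 : S 1 by exists 1, 0%N; rewrite emb1 mulr1.
have Smul a b : S a -> S b -> S (a * b).
  move=> [t1 [k1 [Mt1 ->]]] [t2 [k2 [Mt2 ->]]]; exists (t1 * t2), (k1 + k2)%N.
  split; first by rewrite embM => /Mmul [].
  by rewrite exprD; ring.
have IS s : S s -> ~ I (emb s).
  by move=> [t [k [Mt ->]]]; rewrite embM embX => Is; apply: noS; exists t, k.
have [sI _ _] := fI.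
have [P [Pprime IP PS]] := prime_ideal_avoiding S1 Smul sI iI IS.
have [_ iP _ _] := Pprime.
have PM : ksubset P M.
  move=> z Pz; have [d ed] := iP z Pz; subst z.
  by apply: NNPP => Md; apply: (PS d) => //; exists d, 0%N; rewrite mulr1.
case: (Mheight P Pprime PM) => [P0 | PMeq].
  by case: fI => _ [z [Iz /eqP z0]] _; apply/z0/(P0 z).1/IP.
by apply: (PS y); [exists 1, 1%N; rewrite emb1 mul1r expr1 | exact/PMeq].
Qed.

Lemma prime_contains_factor P (e : D) (s : seq (K -> Prop)) : prime_ideal P ->
  P (emb e) -> (forall i, (i < size s)%N -> star_homog star (nth DS s i)) ->
  kseteq (principal (emb e)) (star (kprod s)) ->
  exists2 i, (i < size s)%N & ksubset (nth DS s i) P.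
Proof.
move=> Pprime Pe sI es; apply: NNPP => noI.
have fs : frac_ideal (kprod s) by apply: frac_ideal_kprod => i /sI [[[]]].
have [|d [sd []]] := kprod_avoid_prime Pprime (s := s).
  by move=> i lti; split; [case: (sI i lti) => _ [] | move=> IP; apply: noI; exists i].
have [sP _ _ _] := Pprime.
have [w [Dw ->]] := (es (emb d)).2 (star_ext fs sd).
by rewrite mulrC; apply: submoduleZ sP Dw Pe.
Qed.

Lemma max_star_height_one M : star_SH_type1 star -> max_star star M -> height_one M.
Proof.
move=> SH1 hM; have [fM _ iM M1 _] := max_starP hM.
split; [by case: fM | exact: max_star_prime |] => P Pprime PM.
have [sP iP P1 _] := Pprime.
have [[x [Px x0]] | P0] := classic (exists x, P x /\ x != 0); last first.
  left=> z; split => [Pz | ->]; last by case: sP.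
  by apply: NNPP => z0; apply: P0; exists z; split => //; apply/eqP.
right=> z; split => [/PM // | Mz].
have [e ee] := iP x Px; subst x.
have e0 : e != 0 by rewrite -emb_eq0.
have eu : e \isn't a GRing.unit.
  apply/negP => eu; apply: P1; rewrite -emb1 -(mulVr eu) embM.
  exact: submoduleZ sP (Dset_emb _) Px.
have [s [sI es]] := SH1 e e0 eu.
have [i lti IP] := prime_contains_factor Pprime Px (fun i lti => (sI i lti).1) es.
have [-> | z0] := eqVneq z 0; first by case: sP.
have [f ef] := iM z Mz; subst z.
have [n [_ sub]] := (sI i lti).2 M hM (fun w Iw => PM w (IP w Iw)) _ Mz z0.
apply: (prime_ideal_pow (n := n)) => //; apply/IP/sub; split.
  by rewrite -embX; exact: Dset_emb.
by exists 1, 1; rewrite emb1.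
Qed.

Lemma star_homog_type1_of_height_one I : star_homog star I ->
  (forall M, max_star star M -> height_one M) -> star_homog_type1 star I.
Proof.
move=> hI Mheight; split => // M hM IM y My y0.
have [[[fI _] _] [iI _] _] := hI.
have [_ _ iM _ _] := max_starP hM; have [f ef] := iM y My; subst y.
have [t [k [Mt Itk]]] := height_one_pow_mem hM (Mheight M hM) fI iI IM My.
exists k.+1; split => // _ [[w ->] [a [s [Ms ws]]]].
have [_ _ _ Mmul] := max_star_prime hM.
apply: (star_homog_saturated (t := t * s) hM hI IM); first by rewrite embM => /Mmul [].
have [sI _ _] := fI.
have -> : emb (t * s) * emb w = emb a * emb f * (emb t * emb f ^+ k).
  by rewrite embM -mulrA [emb s * _]mulrC ws exprS; ring.
by apply: submoduleZ sI _ Itk; apply/DsetM/Dset_emb/Dset_emb.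
Qed.

Lemma star_SH_type1_weakly_Krull : star_SH_type1 star <-> star_weakly_Krull star.
Proof.
split=> [SH1 | [SH Mheight]].
  split=> [x x0 xu | M]; last exact: max_star_height_one.
  by have [s [sI es]] := SH1 x x0 xu; exists s; split => // i /sI [].
move=> x x0 xu; have [s [sI es]] := SH x x0 xu; exists s; split => // i lti.
exact: star_homog_type1_of_height_one (sI i lti) Mheight.
Qed.

End StarOperation.
End FractionalIdeals.

Theorem theoremP2 (D : idomainType)
  (star : ({fraction D} -> Prop) -> ({fraction D} -> Prop)) :
  is_star_op star -> finite_character star ->
  (star_SH_type1 star <-> star_weakly_Krull star).
Proof. exact: star_SH_type1_weakly_Krull. Qed.
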